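(* Let $n\ge 3$. The prism $C_n\times K_2$ is $(a,d)$-distance antimagic for some integers $a$ and $d\ge0$ if and only if $d=1$.
   Context: The prism $C_n\times K_2$ is the Cartesian product of the cycle $C_n$ and $K_2$: it has vertices $x_1,\dots,x_n,y_1,\dots,y_n$, with $x_1\cdots x_nx_1$ and $y_1\cdots y_ny_1$ cycles and additional edges $x_iy_i$ for $i=1,\dots,n$; it is $3$-regular of order $2n$. For a graph $G=(V,E)$ with $v=|V|$ and a bijection $f:V\to\{1,\dots,v\}$, the vertex-weight of $x$ is $w(x)=\sum_{y\in N(x)}f(y)$ with $N(x)$ the set of neighbours of $x$. For integers $a$ and $d\ge0$, $f$ is an $(a,d)$-distance antimagic labeling if the multiset of vertex-weights equals $\{a,a+d,\dots,a+(v-1)d\}$; $G$ is $(a,d)$-distance antimagic if it admits such a labeling. *)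

From mathcomp Require Import all_boot all_order all_algebra.
Set Implicit Arguments. Unset Strict Implicit. Unset Printing Implicit Defensive.
Import GRing.Theory Num.Theory.

Definition is_vertex_labeling (T : finType) (f : T -> nat) : Prop :=
  injective f /\ forall x : T, 0 < f x <= #|T|.

Definition vweight (T : finType) (e : rel T) (f : T -> nat) (x : T) : nat :=
  \sum_(y : T | e x y) f y.

Definition dist_antimagic_labeling (T : finType) (e : rel T) (a : int) (d : nat)
    (f : T -> nat) : Prop :=
  is_vertex_labeling f /\
  perm_eq [seq (Posz (vweight e f x)) | x <- enum T]
          [seq (a + Posz i * Posz d)%R | i <- iota 0 #|T|].

Definition dist_antimagic (T : finType) (e : rel T) (a : int) (d : nat) : Prop :=
  exists f : T -> nat, dist_antimagic_labeling e a d f.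

(* The prism C_n x K_2: vertex (i, false) is x_{i+1}, (i, true) is y_{i+1}. *)
Definition prism_vertex (n : nat) : finType := ('I_n * bool)%type.

Definition prism_adj (n : nat) : rel (prism_vertex n) :=
  fun u v =>
    ((u.2 == v.2) && ((val v.1 == (val u.1).+1 %% n) || (val u.1 == (val v.1).+1 %% n)))
    || ((u.1 == v.1) && (u.2 != v.2)).

From mathcomp Require Import all_boot all_order all_algebra zify.
Set Implicit Arguments. Unset Strict Implicit. Unset Printing Implicit Defensive.
Import GRing.Theory.

(* Necessity is a counting argument valid for every 3-regular graph of even
   order v.  Summing the vertex weights counts every label once per
   neighbour, so for a k-regular graph the weights sum to k v (v+1)/2, while
   the arithmetic progression sums to v (2a + d (v-1))/2; hence
   k (v+1) = 2a + d (v-1).  The smallest weight a is a sum of three distinct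
   positive labels, so a >= 6; with k = 3 this forces d <= 2, and since v is
   even the parity of 3 (v+1) forces d to be odd, i.e. d = 1.

   Sufficiency is an explicit labeling: indexing the cycles from 0, x_i
   gets i+1, y_0 gets n+1 and y_i gets 2n+1-i for i >= 1; the weights of
   this labeling are exactly 2n+2, 2n+3, ..., 4n+1. *)

Lemma perm_iota_of_inj (T : finType) (g : T -> nat) (k : nat) :
  injective g -> (forall x, k <= g x < k + #|T|) ->
  perm_eq (map g (enum T)) (iota k #|T|).
Proof.
move=> g_inj g_range; have g_uniq : uniq (map g (enum T)).
  by rewrite map_inj_uniq ?enum_uniq.
apply: uniq_perm => //; first exact: iota_uniq.
have g_sub : {subset map g (enum T) <= iota k #|T|}.
  by move=> _ /mapP [x _ ->]; rewrite mem_iota.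
have [] // := uniq_min_size g_uniq g_sub.
by rewrite size_map size_iota -cardE.
Qed.

Lemma double_sum_iota1 (v : nat) : 2 * \sum_(i <- iota 1 v) i = v * v.+1.
Proof.
elim: v => [|v IH]; first by rewrite big_nil.
by rewrite -[v.+1]addn1 iotaD big_cat big_seq1 /=; lia.
Qed.

Lemma double_sum_labels (T : finType) (f : T -> nat) :
  is_vertex_labeling f -> 2 * \sum_x f x = #|T| * #|T|.+1.
Proof.
move=> [f_inj f_range].
have f_perm : perm_eq (map f (enum T)) (iota 1 #|T|).
  by apply: perm_iota_of_inj => // x; have := f_range x; lia.
by rewrite -double_sum_iota1 -(perm_big _ f_perm) big_map big_enum.
Qed.

Lemma double_sum_arith_prog (a : int) (d v : nat) :
  (2 * \sum_(i <- iota 0 v) (a + Posz i * Posz d)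
   = Posz v * (2 * a + Posz d * (Posz v - 1)))%R.
Proof.
elim: v => [|v IH]; first by rewrite big_nil mulr0 mul0r.
rewrite -[v.+1]addn1 iotaD big_cat big_seq1 /= mulrDr {}IH; lia.
Qed.

(* Handshake identity: in a k-regular graph every label is counted once for
   each of its k neighbours in the total vertex weight. *)
Lemma sum_vweight_regular (T : finType) (e : rel T) (k : nat) (f : T -> nat) :
  symmetric e -> (forall x, #|[pred y | e x y]| = k) ->
  \sum_x vweight e f x = k * \sum_x f x.
Proof.
move=> e_sym e_reg; rewrite /vweight (exchange_big_dep xpredT) //= big_distrr /=.
apply: eq_bigr => y _.
rewrite (eq_bigl [pred x | e y x]) => [|x]; last by rewrite /= e_sym.
by rewrite sum_nat_const e_reg mulnC.
Qed.

Section Antimagic.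
Variables (T : finType) (e : rel T) (a : int) (d : nat) (f : T -> nat).
Hypothesis f_antimagic : dist_antimagic_labeling e a d f.

Lemma antimagic_has_weight_a : 0 < #|T| -> exists x, Posz (vweight e f x) = a.
Proof.
move=> T_gt0; have [_ w_perm] := f_antimagic.
have : (a + Posz 0 * Posz d)%R \in [seq (a + Posz i * Posz d)%R | i <- iota 0 #|T|].
  by apply: map_f; rewrite mem_iota.
by rewrite -(perm_mem w_perm) mul0r addr0 => /mapP [x _ ->]; exists x.
Qed.

Variable k : nat.
Hypotheses (e_sym : symmetric e) (e_reg : forall x, #|[pred y | e x y]| = k).

Lemma antimagic_regular_eq : 0 < #|T| ->
  (Posz k * (Posz #|T| + 1) = 2 * a + Posz d * (Posz #|T| - 1))%R.
Proof.
move=> T_gt0; have [f_lab w_perm] := f_antimagic.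
have sum_eq := @perm_big _ +%R 0%R _ _ _ xpredT id w_perm.
rewrite !big_map -enumT in sum_eq.
have weights : (2 * \sum_(x <- enum T) Posz (vweight e f x)
                 = Posz #|T| * (Posz k * (Posz #|T| + 1)))%R.
  rewrite -(big_morph Posz PoszD erefl) big_enum /= (sum_vweight_regular f e_sym e_reg).
  have := double_sum_labels f_lab; set S := \sum_x f x; set v := #|T|.
  move/(congr1 (muln k)); lia.
apply: (@mulfI _ (Posz #|T|)); first by rewrite -lt0n.
by rewrite -weights sum_eq double_sum_arith_prog.
Qed.
End Antimagic.

(* The arithmetic core of necessity for a cubic graph of even order 2h:
   a >= 6 bounds d by 2, and parity excludes d = 0 and d = 2. *)
Lemma odd_difference_bound (h : nat) (a : int) (d : nat) : 0 < h -> (6 <= a)%R ->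
  (Posz 3 * (Posz h.*2 + 1) = 2 * a + Posz d * (Posz h.*2 - 1))%R -> d = 1.
Proof. by move=> h_gt0 a_ge6; case: d => [|[|[|d]]] //=; nia. Qed.

Lemma val_ordS n (i : 'I_n) : ordS i = (if i.+1 == n then 0 else i.+1) :> nat.
Proof.
rewrite /=; have := ltn_ord i; case: eqP => [->|ne] lt; first exact: modnn.
by rewrite modn_small //; lia.
Qed.

Lemma val_ord_pred n (i : 'I_n) : ord_pred i = (if i == 0 :> nat then n.-1 else i.-1) :> nat.
Proof.
rewrite /=; have := ltn_ord i; case: eqP => [->|ne] lt.
  by rewrite add0n modn_small // ltn_predL.
have -> : (i + n).-1 = i.-1 + n by lia.
by rewrite modnDr modn_small //; lia.
Qed.

Section Prism.
Variable n : nat.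
Local Notation V := (prism_vertex n).

Definition prism_next (u : V) : V := (ordS u.1, u.2).
Definition prism_prev (u : V) : V := (ord_pred u.1, u.2).
Definition prism_rung (u : V) : V := (u.1, ~~ u.2).

Lemma prism_adjE (u v : V) :
  prism_adj u v = [|| v == prism_next u, v == prism_prev u | v == prism_rung u].
Proof.
case: u v => [i b] [j c]; rewrite /prism_adj /prism_next /prism_prev /prism_rung /=.
have -> : (val j == i.+1 %% n) = (j == ordS i) by [].
have -> : (val i == j.+1 %% n) = (j == ord_pred i).
  by rewrite -[RHS](can2_eq (@ordSK n) (@ord_predK n)) eq_sym.
rewrite !xpair_eqE; case: b; case: c => /=; rewrite ?andbT ?andbF ?orbF //.
Qed.

Lemma prism_adj_sym : symmetric (@prism_adj n).
Proof.
move=> u v; rewrite /prism_adj [v.2 == u.2]eq_sym [v.1 == u.1]eq_sym.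
by rewrite [(val u.1 == _) || _]orbC.
Qed.

(* From now on the three neighbours are distinct, which needs n >= 3. *)
Hypothesis n_gt2 : 2 < n.

Definition prism_neighbours (u : V) : seq V := [:: prism_next u; prism_prev u; prism_rung u].

Lemma prism_neighbours_uniq (u : V) : uniq (prism_neighbours u).
Proof.
case: u => [i b]; rewrite /= !inE !xpair_eqE /=.
have -> : (b == ~~ b) = false by case: b.
rewrite eqxx !andbF andbT orbF /= andbT.
apply/eqP => /(congr1 (@nat_of_ord n)); rewrite val_ordS val_ord_pred.
by have := ltn_ord i; case: ifP => /eqP ?; case: ifP => /eqP ?; lia.
Qed.

Lemma prism_regular (u : V) : #|[pred v | prism_adj u v]| = 3.
Proof.
rewrite (@eq_card _ _ (mem (prism_neighbours u))) => [|v]; last by rewrite inE prism_adjE !inE.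
exact/card_uniqP/prism_neighbours_uniq.
Qed.

Lemma prism_vweightE (f : V -> nat) (u : V) :
  vweight (@prism_adj n) f u = f (prism_next u) + f (prism_prev u) + f (prism_rung u).
Proof.
rewrite /vweight (eq_bigl (mem (prism_neighbours u))) => [|v]; last first.
  by rewrite prism_adjE !inE.
by rewrite -big_uniq ?prism_neighbours_uniq //= !big_cons big_nil addn0 addnA.
Qed.

Lemma card_prism : #|V| = n.*2.
Proof. by rewrite card_prod card_ord card_bool muln2. Qed.

(* Three distinct positive labels sum to at least 1 + 2 + 3. *)
Lemma prism_vweight_ge6 (f : V -> nat) (u : V) :
  is_vertex_labeling f -> 6 <= vweight (@prism_adj n) f u.
Proof.
move=> [f_inj f_pos]; have := prism_neighbours_uniq u.
rewrite prism_vweightE /= !inE !negb_or => /andP [/andP [np nr] /andP [pr _]].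
move: np nr pr; rewrite -!(inj_eq f_inj) => /eqP ? /eqP ? /eqP ?.
have := f_pos (prism_next u); have := f_pos (prism_prev u); have := f_pos (prism_rung u).
lia.
Qed.

(* The labeling of the sufficiency part, and the position of each vertex
   weight in the progression 2n+2, ..., 4n+1: the weight of x_i is
   2n+3+i (2n+2 for x_(n-1)), that of y_0 is 3n+3, of y_1 is 3n+2 and of
   y_i is 4n+3-i for i >= 2. *)
Definition prism_label (u : V) : nat :=
  if u.2 then (if u.1 == 0 :> nat then n.+1 else n.*2.+1 - u.1) else u.1.+1.

Definition prism_rank (u : V) : nat :=
  if u.2 then (if u.1 == 0 :> nat then n.+1 else if u.1 == 1 :> nat then n else n.*2.+1 - u.1)
  else (if u.1.+1 == n then 0 else u.1.+1).

Lemma prism_label_labeling : is_vertex_labeling prism_label.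
Proof.
split=> [[i b] [j c]|[i b]]; rewrite ?card_prism /prism_label /=;
  have := ltn_ord i; last by case: b; repeat case: ifP => /eqP ?; lia.
have := ltn_ord j; case: b; case: c => /=; repeat case: ifP => /eqP ?;
  move=> lt_j lt_i eq_ij; try lia; congr (_, _); apply: val_inj => /=; lia.
Qed.

Lemma prism_rank_inj : injective prism_rank.
Proof.
move=> [i b] [j c]; rewrite /prism_rank /=; have := ltn_ord i; have := ltn_ord j.
case: b; case: c => /=; repeat case: ifP => /eqP ?;
  move=> lt_j lt_i eq_ij; try lia; congr (_, _); apply: val_inj => /=; lia.
Qed.

Lemma prism_rank_range (u : V) : 0 <= prism_rank u < 0 + #|V|.
Proof.
case: u => [i b]; rewrite card_prism /prism_rank /=; have := ltn_ord i.
by case: b; repeat case: ifP => /eqP ?; lia.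
Qed.

Lemma prism_label_vweight (u : V) :
  vweight (@prism_adj n) prism_label u = n.*2.+2 + prism_rank u.
Proof.
rewrite prism_vweightE; case: u => [i b].
have succ_i := val_ordS i; have pred_i := val_ord_pred i.
rewrite /prism_label /prism_rank /= in succ_i pred_i *; rewrite succ_i pred_i.
have := ltn_ord i; case: (boolP (i.+1 == n)) => last_i; case: (boolP (i == 0 :> nat)) => first_i;
  rewrite ?last_i ?first_i ?(negbTE last_i) ?(negbTE first_i);
  move: last_i first_i => /eqP ? /eqP ?; case: b => /=; repeat case: ifP => /eqP ?; lia.
Qed.

Lemma prism_antimagic : dist_antimagic (@prism_adj n) (Posz n.*2.+2) 1.
Proof.
exists prism_label; split; first exact: prism_label_labeling.
pose shift (k : nat) : int := Posz (n.*2.+2 + k).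
have -> : [seq Posz (vweight (@prism_adj n) prism_label u) | u <- enum V]
          = map shift (map prism_rank (enum V)).
  by rewrite -map_comp; apply: eq_map => u; rewrite /= prism_label_vweight.
have -> : [seq (Posz n.*2.+2 + Posz i * Posz 1)%R | i <- iota 0 #|V|]
          = map shift (iota 0 #|V|).
  by apply: eq_map => i; rewrite mulr1.
exact/perm_map/perm_iota_of_inj/prism_rank_range/prism_rank_inj.
Qed.
End Prism.

Theorem mainTheorem9 (n : nat) (hn : 3 <= n) (d : nat) :
  (exists a : int, dist_antimagic (@prism_adj n) a d) <-> d = 1.
Proof.
split=> [[a [f f_antimagic]]|->]; last by exists (Posz n.*2.+2); exact: prism_antimagic hn.
have V_gt0 : 0 < #|prism_vertex n| by rewrite card_prism; lia.
have [x weight_x] := antimagic_has_weight_a f_antimagic V_gt0.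
have a_ge6 : (6 <= a)%R by rewrite -weight_x lez_nat prism_vweight_ge6 //; case: f_antimagic.
have := antimagic_regular_eq f_antimagic (@prism_adj_sym n) (prism_regular hn) V_gt0.
rewrite card_prism => sum_eq; apply: (odd_difference_bound _ a_ge6 sum_eq); lia.
Qed.
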